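(* $\dim_{\mathbb C}V_k\le|\mathbf B_k|$, where $|\mathbf B_k|=\frac14(u-1)(w+1)$ if $u$ is odd and $|\mathbf B_k|=\frac14uw-\frac12(v-1-u)$ if $u$ is even.
   Context: $u,v\in\mathbb Z_{\ge2}$ coprime with $u<2v$; $k=-2+u/v<0$, $w=2v-u$, $\mathbb L=2w\mathbb Z$. $\chi^{u,v}_{r,s}(q)=\eta(q)^{-1}\sum_{n\in\mathbb Z}(q^{(2uvn+vr-us)^2/4uv}-q^{(2uvn+vr+us)^2/4uv})$, $\eta$ Dedekind's eta; for $\mu\in\frac1v\mathbb Z$, $\theta'_{\mu+\mathbb L}(q)=-\frac1{2w}\sum_{\lambda\in\mu+\mathbb L}\lambda q^{-\lambda^2/4k}$; for $1\le r\le u-1$, $\mu\in r-1+2\mathbb Z$, $\Gamma^\mu_r=\sum_{s=1}^{v-1}(-1)^{s-1}\frac{\chi^{u,v}_{r,s}}{\eta}[\theta'_{\mu+sk+\mathbb L}-\theta'_{\mu-sk+\mathbb L}]$. $V_k$ is the span of all such $\Gamma^\mu_r$. $\mathbf B_k$ is the set of integer pairs $(\mu;r)$ with $\mu\equiv r-1\pmod2$ and: if $u$ odd, $0\le\mu\le w$, $1\le r\le\frac{u-1}2$; if $u$ even, either $0\le\mu\le w$, $1\le r\le\frac u2-1$, or $0\le\mu\le\frac w2$, $r=\frac u2$. *)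

From HB Require Import structures.
From mathcomp Require Import all_boot all_order all_algebra all_field.
From Stdlib Require Import ClassicalEpsilon.
Set Implicit Arguments. Unset Strict Implicit. Unset Printing Implicit Defensive.
Import Order.TTheory GRing.Theory Num.Theory.
Local Open Scope ring_scope.

(* A formal q-series with rational exponents: e |-> coefficient of q^e. *)
Definition qser := rat -> algC.

(* Formal (finite) sum of a i over the indices i satisfying P, meaningful when
   the set {i | P i} is finite (enumerated by some duplicate-free list);
   it is 0 by convention otherwise (never happens for the series below). *)
Definition fsum (I : eqType) (P : pred I) (a : I -> algC) : algC :=
  let spec := fun s : seq I => uniq s /\ forall i, (i \in s) = P i in
  match excluded_middle_informative (exists s, spec s) with
  | left _ => \sum_(i <- epsilon (inhabits [::]) spec) a i
  | right _ => 0
  end.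

(* Cauchy product of two q-series (exponents bounded below and discrete). *)
Definition qmul (f g : qser) : qser := fun e =>
  fsum (fun p : rat * rat => [&& p.1 + p.2 == e, f p.1 != 0 & g p.2 != 0])
       (fun p => f p.1 * g p.2).

(* Coefficient of q^m in prod_{n>=1} (1 - q^n)^{-1} (number of partitions),
   read off a polynomial truncation prod_{i=1}^m sum_{j=0}^m q^(i j). *)
Definition pnum (m : nat) : algC :=
  (\prod_(1 <= i < m.+1) \sum_(j < m.+1) ('X^(i * j) : {poly algC}))`_m.

(* eta(q)^{-1} = q^{-1/24} prod_{n>=1} (1-q^n)^{-1}. *)
Definition etaInv : qser := fun e =>
  let x := e + 24%:R^-1 in
  if (denq x == 1) && (0 <= numq x)%R then pnum `|numq x|%N else 0.

(* chi^{u,v}_{r,s}(q) = eta^{-1} sum_n (q^{(2uvn+vr-us)^2/4uv} - q^{(2uvn+vr+us)^2/4uv}) *)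
Definition chi (u v r s : nat) : qser :=
  let A (n : int) : rat := ((2 * u * v)%:R * n%:~R + (v * r)%:R - (u * s)%:R) ^+ 2
                            / (4 * u * v)%:R in
  let B (n : int) : rat := ((2 * u * v)%:R * n%:~R + (v * r)%:R + (u * s)%:R) ^+ 2
                            / (4 * u * v)%:R in
  qmul etaInv (fun e => fsum (fun n : int => A n == e) (fun _ => 1)
                       - fsum (fun n : int => B n == e) (fun _ => 1)).

Definition kk (u v : nat) : rat := -2 + u%:R / v%:R.
Definition ww (u v : nat) : rat := 2 * v%:R - u%:R.

(* theta'_{c + L}(q) = -1/(2w) sum_{lambda in c + 2wZ} lambda q^{-lambda^2/4k} *)
Definition thetaP (u v : nat) (c : rat) : qser := fun e =>
  let lam (j : int) : rat := c + 2 * ww u v * j%:~R in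
  - (ratr (2 * ww u v))^-1 *
    fsum (fun j : int => lam j ^+ 2 * (- (4 * kk u v)^-1) == e)
         (fun j => ratr (lam j)).

(* Gamma^mu_r = sum_{s=1}^{v-1} (-1)^{s-1} (chi_{r,s}/eta) [theta'_{mu+sk+L} - theta'_{mu-sk+L}] *)
Definition Gamma (u v : nat) (mu : int) (r : nat) : qser := fun e =>
  \sum_(1 <= s < v)
    (-1) ^+ (s.-1) *
    qmul (qmul (chi u v r s) etaInv)
         (fun e' => thetaP u v (mu%:~R + s%:R * kk u v) e'
                  - thetaP u v (mu%:~R - s%:R * kk u v) e') e.

Definition inBk (u v : nat) (mu r : int) : bool :=
  let w : int := (2 * v)%:Z - u%:Z in
  [&& (2 %| mu - (r - 1))%Z, 0 <= mu &
    if odd u then [&& mu <= w, 1 <= r & 2 * r <= u%:Z - 1]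
    else [&& mu <= w, 1 <= r & 2 * r <= u%:Z - 2]
         || [&& 2 * mu <= w & 2 * r == u%:Z]].

(* |B_k|: all members satisfy 0 <= mu <= w < 2v and 1 <= r <= u. *)
Definition card_Bk (u v : nat) : nat :=
  size [seq p <- [seq (m%:Z, r%:Z) | m <- iota 0 (2 * v), r <- iota 0 u.+1]
          | inBk u v p.1 p.2].

From HB Require Import structures.
From mathcomp Require Import all_boot all_order all_algebra all_field.
From mathcomp Require Import zify ring.
From Stdlib Require Import ClassicalEpsilon FunctionalExtensionality.
Import Order.TTheory GRing.Theory Num.Theory.
Local Open Scope ring_scope.
Set Implicit Arguments. Unset Strict Implicit. Unset Printing Implicit Defensive.

(* Three symmetries of the functions Gamma^mu_r do the work.  Since theta'_{c+L}
   depends only on c modulo L and is odd in c, Gamma^mu_r is 2w-periodic and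
   even in mu.  Since (v - s) k = - s k - w, reindexing s -> v - s together
   with the Kac-table symmetry chi_{u-r,v-s} = chi_{r,s} gives
   Gamma^mu_{u-r} = +-Gamma^{mu-w}_r.  Hence every Gamma^mu_r is a multiple of
   one with 1 <= r <= u/2 and 0 <= mu <= w, and with mu <= w/2 in the middle
   column r = u/2: these indices form B_k, which is then counted column by
   column. *)

Lemma fsumE (I : eqType) (P : pred I) (a : I -> algC) (s : seq I) :
  uniq s -> (forall i, (i \in s) = P i) -> fsum P a = \sum_(i <- s) a i.
Proof.
move=> us sP; rewrite /fsum.
case: excluded_middle_informative => [_|]; last by case; exists s.
set t := epsilon _ _.
have [ut tP] : uniq t /\ forall i, (i \in t) = P i.
  by apply: (epsilon_spec (inhabits [::]) (fun s => uniq s /\ _)); exists s.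
by apply/perm_big/uniq_perm => // i; rewrite tP sP.
Qed.

Lemma fsum_reindex (I J : eqType) (P : pred I) (Q : pred J)
    (a : I -> algC) (b : J -> algC) (h : I -> J) (h' : J -> I) :
  cancel h h' -> cancel h' h -> (forall i, Q (h i) = P i) ->
  (forall i, b (h i) = a i) -> fsum P a = fsum Q b.
Proof.
move=> hK h'K hQ hb.
have [[s [us sP]]|noP] := excluded_middle_informative
  (exists s : seq I, uniq s /\ forall i, (i \in s) = P i).
  have hsQ j : (j \in map h s) = Q j.
    by rewrite -{1}(h'K j) (mem_map (can_inj hK)) sP -hQ h'K.
  rewrite (fsumE a us sP) (fsumE b _ hsQ) ?map_inj_uniq ?big_map //.
    by apply: eq_bigr => i _; rewrite hb.
  exact: can_inj hK.
have noQ : ~ exists t : seq J, uniq t /\ forall j, (j \in t) = Q j.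
  case=> t [ut tQ]; apply: noP; exists (map h' t); split.
    by rewrite map_inj_uniq //; apply: can_inj h'K.
  by move=> i; rewrite -{1}(hK i) (mem_map (can_inj h'K)) tQ hQ.
by rewrite /fsum; do 2 case: excluded_middle_informative => // _.
Qed.

Lemma eq_fsum (I : eqType) (P Q : pred I) (a b : I -> algC) :
  P =1 Q -> a =1 b -> fsum P a = fsum Q b.
Proof. by move=> PQ ab; apply: (@fsum_reindex _ _ _ _ _ _ id id). Qed.

Lemma fsumN (I : eqType) (P : pred I) (a : I -> algC) :
  fsum P (fun i => - a i) = - fsum P a.
Proof.
by rewrite /fsum; case: excluded_middle_informative => _; rewrite ?sumrN ?oppr0.
Qed.

Lemma qmulN (f g : qser) e : qmul f (fun x => - g x) e = - qmul f g e.
Proof.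
by rewrite /qmul -fsumN; apply: eq_fsum => [p|p]; rewrite ?oppr_eq0 ?mulrN.
Qed.

Lemma signr_subn_pred (R : pzRingType) v s : (0 < s < v)%N ->
  (-1) ^+ (v - s).-1 = (-1) ^+ v * (-1) ^+ s.-1 :> R.
Proof.
move=> hs; rewrite -[in RHS](_ : ((v - s).-1 + s.-1).+2 = v); last by lia.
by rewrite !exprS mulN1r mulN1r opprK exprD -mulrA -expr2 sqrr_sign mulr1.
Qed.

Definition wz (u v : nat) : int := (2 * v)%:Z - u%:Z.

Lemma wzE u v : (wz u v)%:~R = ww u v.
Proof. by rewrite /wz /ww intrB -!pmulrn natrM. Qed.

Section Symmetries.
Variables u v : nat.

Lemma thetaP_shift c (m : int) :
  thetaP u v (c + 2 * ww u v * m%:~R) = thetaP u v c.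
Proof.
apply: functional_extensionality => e; rewrite /thetaP; congr (_ * _).
have shift_lam j : c + 2 * ww u v * m%:~R + 2 * ww u v * j%:~R
                   = c + 2 * ww u v * (j + m)%:~R by rewrite intrD; ring.
apply: (@fsum_reindex _ _ _ _ _ _ (fun j => j + m) (fun j => j - m)).
- exact: addrK.
- exact: subrK.
- by move=> j /=; rewrite shift_lam.
- by move=> j; rewrite shift_lam.
Qed.

Lemma thetaPN c e : thetaP u v (- c) e = - thetaP u v c e.
Proof.
rewrite /thetaP -mulrN -fsumN; congr (_ * _).
have neg_lam j : c + 2 * ww u v * (- j)%:~R = - (- c + 2 * ww u v * j%:~R).
  by rewrite intrN; ring.
apply: (@fsum_reindex _ _ _ _ _ _ -%R -%R); try exact: opprK.
- by move=> j /=; rewrite neg_lam sqrrN.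
- by move=> j; rewrite neg_lam rmorphN opprK.
Qed.

Lemma chi_reflect r s : (r <= u)%N -> (s <= v)%N ->
  chi u v (u - r) (v - s) = chi u v r s.
Proof.
move=> hr hs; rewrite /chi; congr (qmul etaInv _).
apply: functional_extensionality => e; congr (_ - _).
- have reflect_A (n : int) :
      ((2*u*v)%:R * (- n)%:~R + (v*r)%:R - (u*s)%:R : rat)
      = - ((2*u*v)%:R * n%:~R + (v*(u-r))%:R - (u*(v-s))%:R).
    by rewrite !natrM !natrB // intrN; ring.
  apply: (@fsum_reindex _ _ _ _ _ _ -%R -%R) => //; try exact: opprK.
  by move=> n /=; rewrite reflect_A sqrrN.
- have reflect_B (n : int) :
      ((2*u*v)%:R * (- n - 1)%:~R + (v*r)%:R + (u*s)%:R : rat)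
      = - ((2*u*v)%:R * n%:~R + (v*(u-r))%:R + (u*(v-s))%:R).
    by rewrite !natrM !natrB // intrB intrN; ring.
  apply: (@fsum_reindex _ _ _ _ _ _ (fun n => - n - 1) (fun n => - n - 1)) => //.
  + by move=> n; ring.
  + by move=> n; ring.
  + by move=> n /=; rewrite reflect_B sqrrN.
Qed.

Lemma Gamma_shift (mu m : int) r :
  Gamma u v (mu + 2 * wz u v * m) r = Gamma u v mu r.
Proof.
apply: functional_extensionality => e; apply: eq_bigr => s _.
congr (_ * qmul _ _ e); apply: functional_extensionality => e'.
have shift_arg (x : rat) : (mu + 2 * wz u v * m)%:~R + x
                           = (mu%:~R + x) + 2 * ww u v * m%:~R.
  by rewrite intrD !intrM wzE; ring.
by rewrite !shift_arg !thetaP_shift.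
Qed.

Lemma GammaN (mu : int) r : Gamma u v (- mu) r = Gamma u v mu r.
Proof.
apply: functional_extensionality => e; apply: eq_bigr => s _.
congr (_ * qmul _ _ e); apply: functional_extensionality => e'.
have -> : (- mu)%:~R + s%:R * kk u v = - (mu%:~R - s%:R * kk u v) :> rat.
  by rewrite intrN; ring.
have -> : (- mu)%:~R - s%:R * kk u v = - (mu%:~R + s%:R * kk u v) :> rat.
  by rewrite intrN; ring.
rewrite !thetaPN; ring.
Qed.

Lemma Gamma_reflect (mu : int) r : (0 < v)%N -> (r <= u)%N ->
  Gamma u v mu (u - r) = (fun e => - (-1) ^+ v * Gamma u v (mu - wz u v) r e).
Proof.
move=> hv hr; apply: functional_extensionality => e; rewrite /Gamma mulr_sumr.
rewrite big_nat_rev /=; apply: eq_big_nat => s /andP[hs1 hsv].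
rewrite (_ : 1 + v - s.+1 = v - s)%N; last by lia.
rewrite (chi_reflect hr (ltnW hsv)) signr_subn_pred ?hs1 //.
have v_neq0 : (v%:R : rat) != 0 by rewrite pnatr_eq0 -lt0n.
have reflect_plus : mu%:~R + (v - s)%:R * kk u v
                    = (mu - wz u v)%:~R - s%:R * kk u v :> rat.
  by rewrite intrB wzE /ww /kk natrB; [field | lia].
have reflect_minus : mu%:~R - (v - s)%:R * kk u v
    = ((mu - wz u v)%:~R + s%:R * kk u v) + 2 * ww u v * 1%:~R :> rat.
  by rewrite intrB wzE /ww /kk natrB; [field | lia].
rewrite reflect_plus reflect_minus thetaP_shift.
set Ap := (mu - wz u v)%:~R + s%:R * kk u v; set Am := (mu - wz u v)%:~R - _.
have -> : (fun e' => thetaP u v Am e' - thetaP u v Ap e')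
          = (fun e' => - (thetaP u v Ap e' - thetaP u v Am e')).
  by apply: functional_extensionality => e'; rewrite opprB.
rewrite qmulN; ring.
Qed.

End Symmetries.

Definition is_multiple (f g : qser) := exists c : algC, f = (fun e => c * g e).

Lemma is_multiple_refl f : is_multiple f f.
Proof. by exists 1; apply: functional_extensionality => e; rewrite mul1r. Qed.

Lemma is_multiple_trans f g h :
  is_multiple f g -> is_multiple g h -> is_multiple f h.
Proof.
move=> [c ->] [d ->]; exists (c * d).
by apply: functional_extensionality => e; rewrite mulrA.
Qed.

Lemma is_multiple_span n (g : 'I_n -> qser) f i :
  is_multiple f (g i) -> exists c : 'I_n -> algC, f = (fun e => \sum_j c j * g j e).
Proof.
move=> [c ->]; exists (fun j => if j == i then c else 0).
apply: functional_extensionality => e; rewrite (bigD1 i) //= eqxx big1 ?addr0 //.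
by move=> j /negbTE ->; rewrite mul0r.
Qed.

Section Reduction.
Variables u v : nat.
Hypotheses (hv : (0 < v)%N) (hlt : (u < 2 * v)%N).

Lemma Gamma_reflect_multiple (mu : int) r : (r <= u)%N ->
  is_multiple (Gamma u v mu (u - r)) (Gamma u v (mu - wz u v) r).
Proof. by move=> hr; exists (- (-1) ^+ v); rewrite Gamma_reflect. Qed.

Lemma Gamma_reduce_col (mu : int) r :
  (1 <= r <= u - 1)%N -> (2 %| mu - (r%:Z - 1))%Z ->
  exists (mu1 : int) (r1 : nat), [/\ (0 < r1)%N, (r1.*2 <= u)%N,
    (2 %| mu1 - (r1%:Z - 1))%Z & is_multiple (Gamma u v mu r) (Gamma u v mu1 r1)].
Proof.
move=> hr hpar; case: (leqP r.*2 u) => hr2.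
  by exists mu, r; split; [lia | lia | done | exact: is_multiple_refl].
exists (mu - wz u v), (u - r)%N; split; rewrite /wz; try lia.
by rewrite {1}(_ : r = u - (u - r))%N; [apply: Gamma_reflect_multiple | ]; lia.
Qed.

Lemma Gamma_reduce_row (mu : int) r : exists m : int,
  [/\ 0 <= m <= wz u v, (2 %| m - mu)%Z & Gamma u v mu r = Gamma u v m r].
Proof.
have w_gt0 : 0 < wz u v by rewrite /wz; lia.
set m := (mu %% (2 * wz u v))%Z.
have mu_m : Gamma u v mu r = Gamma u v m r.
  by rewrite -[RHS](Gamma_shift _ _ _ (mu %/ (2 * wz u v))%Z) /m; congr Gamma; lia.
case: (leP m (wz u v)) => hm; first by exists m; split; rewrite // /m; lia.
exists (2 * wz u v - m); split; try lia.
by rewrite mu_m -GammaN -(Gamma_shift _ _ _ 1); congr Gamma; ring.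
Qed.

Lemma Gamma_reduce_middle (m : int) r : (r.*2 = u)%N ->
  is_multiple (Gamma u v m r) (Gamma u v (wz u v - m) r).
Proof.
move=> hr; rewrite -[X in Gamma _ _ _ X](_ : u - r = r)%N; last by lia.
by rewrite -[wz u v - m]opprB GammaN; apply: Gamma_reflect_multiple; lia.
Qed.

Lemma Gamma_reduce_Bk (mu : int) r :
  (1 <= r <= u - 1)%N -> (2 %| mu - (r%:Z - 1))%Z ->
  exists (m : int) (r' : nat),
    inBk u v m r'%:Z /\ is_multiple (Gamma u v mu r) (Gamma u v m r').
Proof.
move=> hr hpar.
have [mu1 [r1 [r1_gt0 r1_le par1 mul1]]] := Gamma_reduce_col hr hpar.
have [m [m_bds par_m mu1_m]] := Gamma_reduce_row mu1 r1.
rewrite mu1_m in mul1.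
have [r1_mid | r1_side] := eqVneq r1.*2 u; last first.
  by exists m, r1; split => //; rewrite /inBk /wz in m_bds par_m *; case: ifP; lia.
case: (leP (2 * m) (wz u v)) => hm.
  by exists m, r1; split => //; rewrite /inBk /wz in m_bds par_m hm *; case: ifP; lia.
exists (wz u v - m), r1; split.
  by rewrite /inBk /wz in m_bds par_m hm *; case: ifP; lia.
exact: is_multiple_trans mul1 (Gamma_reduce_middle _ r1_mid).
Qed.

End Reduction.

Local Open Scope nat_scope.

Lemma sum_odd_neq n (b : bool) : \sum_(0 <= m < n) (odd m != b) = (n + b)./2.
Proof.
elim: n => [|n IH]; first by rewrite big_geq //; case: b.
by rewrite big_nat_recr //= IH; case: b {IH}; case: (boolP (odd n)); lia.
Qed.

Lemma sum_odd_neq_le N W (b : bool) : W < N ->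
  \sum_(0 <= m < N) ((odd m != b) && (m <= W)) = (W.+1 + b)./2.
Proof.
move=> hW; rewrite -sum_odd_neq (big_nat_widen _ _ _ _ _ hW) [RHS]big_mkcond /=.
by apply: eq_bigr => m _; rewrite ltnS; case: (m <= W); rewrite ?andbT ?andbF.
Qed.

Definition Bk_bound (u v r : nat) : nat :=
  if r.*2 == u then (2 * v - u)./2 else 2 * v - u.

Lemma inBk_nat u v (m r : nat) : 0 < u < 2 * v ->
  inBk u v m r = [&& odd m != odd r, 0 < r, r <= u./2 & m <= Bk_bound u v r].
Proof. by move=> hu; rewrite /inBk /Bk_bound; case: ifP; case: ifP; lia. Qed.

Definition Bk_list (u v : nat) : seq (int * int) :=
  [seq p <- [seq (m%:Z, r%:Z) | m <- iota 0 (2 * v), r <- iota 0 u.+1]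
    | inBk u v p.1 p.2].

Lemma mem_Bk_list u v (m : int) (r : nat) : 0 < u < 2 * v ->
  ((m, r%:Z) \in Bk_list u v) = inBk u v m r.
Proof.
move=> hu; rewrite mem_filter -[inBk _ _ _ _]/(inBk u v m r).
case inB: (inBk u v m r) => //.
have [m_ge0 m_le r_le] : [/\ (0 <= m)%R, (m < (2 * v)%:Z)%R & r <= u].
  by move: inB; rewrite /inBk; case: ifP => _ inB; split; lia.
rewrite -[m]gez0_abs //.
by apply: (allpairs_f (fun a b : nat => (a%:Z, b%:Z))); rewrite mem_iota; lia.
Qed.

Lemma sum_inBk_col u v (r : nat) : 0 < u < 2 * v ->
  \sum_(0 <= m < 2 * v) (if inBk u v m r then 1 else 0)
  = if 0 < r <= u./2 then ((Bk_bound u v r).+1 + odd r)./2 else 0.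
Proof.
move=> hu; have bound_lt : Bk_bound u v r < 2 * v by rewrite /Bk_bound; case: ifP; lia.
under eq_bigr => m _ do rewrite inBk_nat //.
case: ifP => [/andP[r_gt0 r_le] | r_out]; last first.
  by rewrite big1 // => m _; move: r_out; case: (0 < r); case: (r <= _); rewrite /= ?andbF.
rewrite -(sum_odd_neq_le _ bound_lt); apply: eq_bigr => m _.
by rewrite r_gt0 r_le; case: (_ && _).
Qed.

Lemma card_Bk_cols u v : 0 < u < 2 * v ->
  card_Bk u v = \sum_(1 <= r < (u./2).+1) ((Bk_bound u v r).+1 + odd r)./2.
Proof.
move=> hu; rewrite /card_Bk size_filter -sum1_count big_mkcond big_allpairs_dep /=.
have iotaE n : iota 0 n = index_iota 0 n by rewrite /index_iota subn0.
rewrite !iotaE exchange_big /=.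
under eq_bigr => r _ do rewrite sum_inBk_col //.
rewrite -big_mkcond /= (big_nat_widen _ _ _ _ _ (_ : (u./2).+1 <= u.+1)); last by lia.
rewrite (big_nat_widenl _ _ _ _ _ (leq0n 1)); apply: eq_bigl => r; lia.
Qed.

Lemma card_Bk_odd u v : odd u -> u < 2 * v -> card_Bk u v = u./2 * (v - u./2).
Proof.
move=> u_odd hlt; rewrite card_Bk_cols ?hlt ?odd_gt0 //.
rewrite (eq_big_nat _ _ (F2 := fun=> v - u./2)) ?sum_nat_const_nat ?subn1 //.
by move=> r _; rewrite /Bk_bound; case: ifP; case: (odd r); lia.
Qed.

Lemma card_Bk_even u v : ~~ odd u -> odd v -> 0 < u < 2 * v ->
  (card_Bk u v).*2 + (v - u./2) = (u./2 * (v - u./2)).*2 + u./2 + 1.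
Proof.
move=> u_even v_odd hu; rewrite card_Bk_cols // big_nat_recr /=; last by lia.
set a := u./2; set h := v - a.
have side_cols : \sum_(1 <= r < a) ((Bk_bound u v r).+1 + odd r)./2
                 = \sum_(1 <= r < a) (h + (odd r != false)).
  apply: eq_big_nat => r r_lt; rewrite /Bk_bound.
  by case: ifP; case: (boolP (odd r)); rewrite /h /a; lia.
have odd_cols : \sum_(1 <= r < a) (odd r != false) = a./2.
  by rewrite -[in RHS](addn0 a) -(sum_odd_neq a false) [RHS]big_ltn //; lia.
have [a_gt0 u_2a v_ah] : [/\ 0 < a, a.*2 = u & v = a + h] by split; rewrite /h /a; lia.
rewrite side_cols big_split /= sum_nat_const_nat odd_cols /Bk_bound u_2a eqxx.
rewrite mulnC mulnBr muln1.
have le_h : h <= h * a by rewrite leq_pmulr.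
move: v_odd; rewrite v_ah; case: (boolP (odd a)); lia.
Qed.

Local Open Scope ring_scope.

Lemma card_BkE u v : (0 < u)%N -> coprime u v -> (u < 2 * v)%N ->
  (card_Bk u v)%:R =
    (if odd u then (u%:R - 1) * (ww u v + 1) / 4
     else u%:R * ww u v / 4 - (v%:R - 1 - u%:R) / 2 :> rat).
Proof.
move=> u_gt0 huv hlt; set a := u./2; rewrite /ww.
case: ifP => u_odd.
  have [u_2a1 a_le_v] : u = (2 * a + 1)%N /\ (a <= v)%N by split; rewrite /a; lia.
  by rewrite card_Bk_odd // natrM natrB // [in RHS]u_2a1 natrD natrM; field.
have v_odd : odd v by rewrite -coprime2n (coprime_dvdl _ huv) // dvdn2 u_odd.
have hu : (0 < u < 2 * v)%N by rewrite u_gt0.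
move/(congr1 (fun n : nat => n%:R : rat)): (card_Bk_even (negbT u_odd) v_odd hu).
rewrite -/a; set h := (v - a)%N.
have [u_2a v_ah] : u = (2 * a)%N /\ v = (a + h)%N by split; rewrite /h /a; lia.
rewrite -!muln2 /= !natrD !natrM => card_eq.
rewrite [in RHS]u_2a [in RHS]v_ah natrM !natrD.
rewrite (_ : (card_Bk u v)%:R = ((card_Bk u v)%:R * 2 + h%:R - h%:R) / 2); last by field.
by rewrite card_eq; field.
Qed.

Theorem mainTheorem12 (u v : nat)
  (hu : (2 <= u)%N) (hv : (2 <= v)%N) (huv : coprime u v) (hlt : (u < 2 * v)%N) :
  (* dim V_k <= |B_k| : V_k lies in the span of |B_k| series *)
  (exists g : 'I_(card_Bk u v) -> qser,
     forall (mu : int) (r : nat),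
       (1 <= r <= u - 1)%N -> (2 %| mu - (r%:Z - 1))%Z ->
       exists c : 'I_(card_Bk u v) -> algC,
         Gamma u v mu r = (fun e => \sum_i c i * g i e))
  /\ (card_Bk u v)%:R =
       (if odd u then (u%:R - 1) * (ww u v + 1) / 4
        else u%:R * ww u v / 4 - (v%:R - 1 - u%:R) / 2 :> rat).
Proof.
have u_gt0 : (0 < u)%N := ltnW hu.
split; last exact: card_BkE u_gt0 huv hlt.
pose p i := nth (0, 0) (Bk_list u v) i.
exists (fun i => Gamma u v (p i).1 `|(p i).2|%N) => mu r hr hpar.
have [m [r' [m_r'_in mult]]] := Gamma_reduce_Bk (ltnW hv) hlt hr hpar.
have mem : (m, r'%:Z) \in Bk_list u v by rewrite mem_Bk_list ?u_gt0.
have i_lt : (index (m, r'%:Z) (Bk_list u v) < card_Bk u v)%N by rewrite index_mem.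
apply: (is_multiple_span (i := Ordinal i_lt)).
by rewrite /p /= nth_index.
Qed.
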